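(* Let $\boldsymbol V$ be a generically irreducible $(\boldsymbol{\mathfrak g}_d,K)$-module for $G(\mathbb R)=SL(2,\mathbb R)$. Then $H_{D_d}(\boldsymbol V)=0$ if and only if $\mathcal K(\boldsymbol V)=2\mathbb Z$ or $\mathcal K(\boldsymbol V)=2\mathbb Z+1$. Moreover, for $m\in\mathbb N$ (resp. $m\in\mathbb N_0$ in case 3), as $\boldsymbol{\mathfrak k}$-modules over $\mathbb C[t]$: (1) if $\mathcal K(\boldsymbol V)=\{m,m+2,m+4,\dots\}$ then $H_{D_d}(\boldsymbol V)\cong\mathbb C[t]\{v_m\otimes\tilde y\}$, whose only $\tilde h$-weight is $m-1$; (2) if $\mathcal K(\boldsymbol V)=\{-m,-m-2,\dots\}$ then $H_{D_d}(\boldsymbol V)\cong\mathbb C[t]\{v_{-m}\otimes1\}$, whose only weight is $-m+1$; (3) if $\mathcal K(\boldsymbol V)=\{-m,-m+2,\dots,m\}$ then $H_{D_d}(\boldsymbol V)\cong\mathbb C[t]\{v_m\otimes1,\ v_{-m}\otimes\tilde y\}$, whose only weights are $m+1$ and $-m-1$.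
   Context: $\mathfrak g=\mathfrak{sl}(2,\mathbb C)$, $K=SO(2,\mathbb C)$, with an $\mathfrak{sl}_2$-triple $x,y,h$ ($[x,y]=h$, $[h,x]=2x$, $[h,y]=-2y$) such that $\mathfrak k=\mathbb Ch$, $\mathfrak p=\mathbb Cx\oplus\mathbb Cy$. In $\mathbb C[t]\otimes\mathfrak g$ put $\tilde x=t\otimes x$, $\tilde y=t\otimes y$, $\tilde h=1\otimes h$; the deformation family is $\boldsymbol{\mathfrak g}_d=\boldsymbol{\mathfrak k}\oplus\boldsymbol{\mathfrak p}_d$, $\boldsymbol{\mathfrak k}=\mathbb C[t]\tilde h$, $\boldsymbol{\mathfrak p}_d=\mathbb C[t]\tilde x\oplus\mathbb C[t]\tilde y$, with $[\tilde h,\tilde x]=2\tilde x$, $[\tilde h,\tilde y]=-2\tilde y$, $[\tilde x,\tilde y]=t^2\tilde h$. The form $\boldsymbol\beta_d$ on $\boldsymbol{\mathfrak p}_d$ has $\boldsymbol\beta_d(\tilde x,\tilde x)=\boldsymbol\beta_d(\tilde y,\tilde y)=0$, $\boldsymbol\beta_d(\tilde x,\tilde y)=4$; $Cl(\boldsymbol{\mathfrak p}_d)$ its Clifford algebra ($XY+YX=\boldsymbol\beta_d(X,Y)$) with canonical map $\gamma_d$. Spin module $\boldsymbol S_d=\bigwedge(\mathbb C[t]\tilde y)=\mathbb C[t]1\oplus\mathbb C[t]\tilde y$ with $\gamma_d(\tilde x)1=0$, $\gamma_d(\tilde x)\tilde y=4$, $\gamma_d(\tilde y)1=\tilde y$,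 $\gamma_d(\tilde y)\tilde y=0$; $\tilde h$ acts on $\boldsymbol S_d$ by $\frac12\gamma_d(\tilde x)\gamma_d(\tilde y)-1$ (weights $1$ on $1$, $-1$ on $\tilde y$), and on $\boldsymbol V\otimes\boldsymbol S_d$ diagonally. Dirac operator $D_d=\frac14(\tilde x\otimes\gamma_d(\tilde y)+\tilde y\otimes\gamma_d(\tilde x))$ acting on $\boldsymbol V\otimes_{\mathbb C[t]}\boldsymbol S_d$; $H_{D_d}(\boldsymbol V)=\ker D_d/(\ker D_d\cap\mathrm{im}D_d)$. A generically irreducible $(\boldsymbol{\mathfrak g}_d,K)$-module (flat $\mathbb C[t]$-module with compatible actions, all but countably many fibers irreducible) decomposes as $\boldsymbol V=\bigoplus_{j\in\mathcal K(\boldsymbol V)}\boldsymbol V_j$, $\tilde h$ acting on $\boldsymbol V_j$ by $j$, each $\boldsymbol V_j$ free of rank one with generator $v_j$; $\mathcal K(\boldsymbol V)$ (the set of $K$-types, identified with $\tilde h$-weights) equals the $K$-type set of some irreducible $(\mathfrak{sl}(2,\mathbb C),K)$-module, i.e. one of $\{m,m+2,\dots\}$, $\{-m,-m-2,\dots\}$ ($m\ge1$), $\{-m,\dots,m\}$ ($m\ge0$), $2\mathbb Z$, $2\mathbb Z+1$. *)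

From HB Require Import structures.
From mathcomp Require Import all_boot all_order all_algebra.
From mathcomp Require Import complex.
From mathcomp Require Import boolp classical_sets cardinality reals.
Set Implicit Arguments. Unset Strict Implicit. Unset Printing Implicit Defensive.
Import Order.TTheory GRing.Theory Num.Theory.
Local Open Scope ring_scope.
Local Open Scope classical_set_scope.
Local Open Scope complex_scope.

(* The deformed module  V = (+)_{j in K} C[t] v_j.                    *)
(*  h~ v_j = j v_j ;  x~ v_j = xco j * v_{j+2} ;  y~ v_j = yco j * v_{j-2}. *)
(* (That x~ raises and y~ lowers the h~-weight by 2 is forced by      *)
(*  [h~,x~] = 2x~, [h~,y~] = -2y~.)  The relation [x~,y~] = t^2 h~ is  *)
(*  the field [bracket]; the support fields say x~ v_j = 0 when        *)
(*  j+2 is not a K-type, etc.                                          *)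
Record gdK_module (R : realType) := GdKModule {
  Kset : set int;
  xco : int -> {poly R[i]};
  yco : int -> {poly R[i]};
  xco_supp : forall j : int, xco j != 0 -> Kset j /\ Kset (j + 2);
  yco_supp : forall j : int, yco j != 0 -> Kset j /\ Kset (j - 2);
  bracket : forall j : int, Kset j ->
    xco (j - 2) * yco j - yco (j + 2) * xco j = 'X ^+ 2 * (j%:~R)%:P
}.

Definition fin_supp (M : nmodType) (f : int -> M) : Prop :=
  exists N : nat, forall j : int, (N < `|j|)%N -> f j = 0.

Section Fibre.
Variables (R : realType) (V : gdK_module R).
Local Notation C := R[i].

(* fibre V_s = (+)_{j in K} C v_j, represented by coordinate functions *)
Definition fibre_elt (f : int -> C) : Prop :=
  fin_supp f /\ forall j, ~ Kset V j -> f j = 0.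

Definition fX (s : C) (f : int -> C) : int -> C :=
  fun j => (xco V (j - 2)).[s] * f (j - 2).
Definition fY (s : C) (f : int -> C) : int -> C :=
  fun j => (yco V (j + 2)).[s] * f (j + 2).
Definition fH (f : int -> C) : int -> C := fun j => j%:~R * f j.
(* action of z in K = SO(2,C) ~ C^* : v_j |-> z^j v_j *)
Definition fK (z : C) (f : int -> C) : int -> C := fun j => (z ^ j) * f j.

Definition fibre_submodule (s : C) (W : set (int -> C)) : Prop :=
  (forall f, W f -> fibre_elt f) /\
  W (fun _ => 0) /\
  (forall f g, W f -> W g -> W (fun j => f j + g j)) /\
  (forall (c : C) f, W f -> W (fun j => c * f j)) /\
  (forall f, W f -> W (fX s f)) /\
  (forall f, W f -> W (fY s f)) /\
  (forall f, W f -> W (fH f)) /\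
  (forall z f, z != 0 -> W f -> W (fK z f)).

Definition fibre_irreducible (s : C) : Prop :=
  (exists f, fibre_elt f /\ f <> (fun _ => 0)) /\
  forall W, fibre_submodule s W ->
    W = [set (fun _ => 0)] \/ W = [set f | fibre_elt f].

Definition generically_irreducible : Prop :=
  countable [set s : C | ~ fibre_irreducible s].
End Fibre.

Definition sl2_Ktype_set (K : set int) : Prop :=
  (exists m : nat, (1 <= m)%N /\ K = [set j : int | (m%:Z <= j) && ((j - m%:Z) %% 2 == 0)%Z]) \/
  (exists m : nat, (1 <= m)%N /\ K = [set j : int | (j <= - m%:Z) && ((j + m%:Z) %% 2 == 0)%Z]) \/
  (exists m : nat, K = [set j : int | (- m%:Z <= j <= m%:Z) && ((j + m%:Z) %% 2 == 0)%Z]) \/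
  K = [set j : int | (j %% 2 == 0)%Z] \/
  K = [set j : int | (j %% 2 == 1)%Z].

Section Dirac.
Variables (R : realType) (V : gdK_module R).
Local Notation C := R[i].
Local Notation P := {poly C}.

(* S_d = C[t] 1 (+) C[t] y~ ; column vectors of coordinates in (1, y~) *)
Definition gamma_x : 'M[P]_2 :=
  \matrix_(a < 2, b < 2) if ((a : nat) == 0%N) && ((b : nat) == 1%N) then 4%:R else 0.
Definition gamma_y : 'M[P]_2 :=
  \matrix_(a < 2, b < 2) if ((a : nat) == 1%N) && ((b : nat) == 0%N) then 1 else 0.
Definition h_spin : 'M[P]_2 := (2^-1 : C)%:P *: (gamma_x *m gamma_y) - 1%:M.

(* V (x)_{C[t]} S_d : u j = coordinates of the (v_j (x) -) component *)
Definition VS_elt (u : int -> 'cV[P]_2) : Prop :=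
  fin_supp u /\ forall j, ~ Kset V j -> u j = 0.

Definition tensX (A : 'M[P]_2) (u : int -> 'cV[P]_2) : int -> 'cV[P]_2 :=
  fun j => xco V (j - 2) *: (A *m u (j - 2)).
Definition tensY (A : 'M[P]_2) (u : int -> 'cV[P]_2) : int -> 'cV[P]_2 :=
  fun j => yco V (j + 2) *: (A *m u (j + 2)).

Definition Dirac (u : int -> 'cV[P]_2) : int -> 'cV[P]_2 :=
  fun j => (4^-1 : C)%:P *: (tensX gamma_y u j + tensY gamma_x u j).

Definition hVS (u : int -> 'cV[P]_2) : int -> 'cV[P]_2 :=
  fun j => (j%:~R : C)%:P *: u j + h_spin *m u j.

(* basis vector v_j (x) e_k (k = 0 : e = 1 ; k = 1 : e = y~) *)
Definition vtens (j : int) (k : 'I_2) : int -> 'cV[P]_2 :=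
  fun i => if i == j then delta_mx k 0 else 0.

Definition in_kerD u := VS_elt u /\ Dirac u = (fun _ => 0).
Definition in_imD u := exists w, VS_elt w /\ u = Dirac w.

(* H_{D_d}(V) = ker D / (ker D /\ im D) = 0 *)
Definition DiracCohom_zero : Prop := forall u, in_kerD u -> in_imD u.

(* H_{D_d}(V) is the free C[t]-module on the classes of g_0..g_{n-1}, with
   g_i an h~-weight vector of weight wt i (so the isomorphism with
   C[t]{g_0,...,g_{n-1}} is one of k-modules over C[t]). *)
Definition DiracCohom_free_on (n : nat) (g : 'I_n -> int -> 'cV[P]_2)
    (wt : 'I_n -> int) : Prop :=
  (forall a, in_kerD (g a)) /\
  (forall a, hVS (g a) = fun j => ((wt a)%:~R : C)%:P *: g a j) /\
  (forall u, in_kerD u -> exists (p : 'I_n -> P) w,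
      in_imD w /\ u = fun j => \sum_a p a *: g a j + w j) /\
  (forall p : 'I_n -> P, in_imD (fun j => \sum_a p a *: g a j) ->
      forall a, p a = 0).
End Dirac.

From HB Require Import structures.
From mathcomp Require Import all_boot all_order all_algebra.
From mathcomp Require Import complex.
From mathcomp Require Import boolp classical_sets cardinality reals.
From mathcomp Require Import ereal measure lebesgue_measure.
From mathcomp Require Import zify ring.
Set Implicit Arguments. Unset Strict Implicit. Unset Printing Implicit Defensive.
Import Order.TTheory GRing.Theory Num.Theory.
Local Open Scope ring_scope.
Local Open Scope classical_set_scope.

(* If a structure coefficient x~ : V_k -> V_(k+2) (or y~ : V_k -> V_(k-2)) vanished
   between two K-types, the vectors vanishing at all K-types beyond k would form a proper
   nonzero submodule of every fibre; as C is uncountable this contradicts generic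
   irreducibility. Hence D_d (v_j (x) 1) = 0 forces j + 2 to be no K-type and
   D_d (v_j (x) y~) = 0 forces j - 2 to be no K-type: ker D_d is the free C[t]-module on the
   vectors v_j (x) 1 with j a highest K-type and v_j (x) y~ with j a lowest one, while every
   element of im D_d has vanishing coordinates at exactly these positions. So
   ker D_d /\ im D_d = 0 and H_(D_d)(V) = ker D_d is free on these extremal vectors; it vanishes
   iff K(V) has neither a highest nor a lowest element, i.e. iff K(V) is 2Z or 2Z+1. *)

Lemma complex_uncountable (R : realType) : ~ countable [set: R[i]].
Proof.
move=> /countable_injP [f injf].
have : countable (`[0%R, 1%R]%classic : set R).
  apply/countable_injP; exists (fun r : R => f r%:C%C) => x y _ _ /injf.
  by rewrite !in_setT => /(_ isT isT) [].
move/countable_lebesgue_measure0; rewrite lebesgue_measure_itv /=.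
by rewrite lte_fin ltr01 oppr0 adde0 => /eqP; rewrite eqe oner_eq0.
Qed.

Section Fibres.
Variables (R : realType) (V : gdK_module R).
Local Notation C := R[i].

Lemma fibre_elt0 : fibre_elt V (fun _ => 0 : C).
Proof. by split=> //; exists 0%N. Qed.

Lemma fibre_eltD f g :
  fibre_elt V f -> fibre_elt V g -> fibre_elt V (fun j => f j + g j).
Proof.
move=> [[Nf f0] Kf] [[Ng g0] Kg]; split; last by move=> j nK; rewrite Kf // Kg // addr0.
by exists (maxn Nf Ng) => j hj; rewrite f0 ?g0 ?addr0 //; lia.
Qed.

Lemma fibre_eltM (c : int -> C) f : fibre_elt V f -> fibre_elt V (fun j => c j * f j).
Proof.
move=> [[N f0] Kf]; split; last by move=> j nK; rewrite Kf // mulr0.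
by exists N => j hj; rewrite f0 ?mulr0.
Qed.

Lemma fibre_eltX s f : fibre_elt V f -> fibre_elt V (fX V s f).
Proof.
move=> [[N f0] Kf]; split; first by exists (N + 2)%N => j hj; rewrite /fX f0 ?mulr0 //; lia.
move=> j nK; rewrite /fX; have [/xco_supp [_]|/negPn/eqP ->] := boolP (xco V (j - 2) != 0).
  by rewrite subrK => /nK.
by rewrite horner0 mul0r.
Qed.

Lemma fibre_eltY s f : fibre_elt V f -> fibre_elt V (fY V s f).
Proof.
move=> [[N f0] Kf]; split; first by exists (N + 2)%N => j hj; rewrite /fY f0 ?mulr0 //; lia.
move=> j nK; rewrite /fY; have [/yco_supp [_]|/negPn/eqP ->] := boolP (yco V (j + 2) != 0).
  by rewrite addrK => /nK.
by rewrite horner0 mul0r.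
Qed.

Definition vanishing_on (S : set int) : set (int -> C) :=
  [set f | fibre_elt V f /\ forall j, S j -> f j = 0].

Section VanishingOn.
Variables (s : C) (S : set int).
Hypothesis S_closedX : forall j, S j -> S (j - 2) \/ (xco V (j - 2)).[s] = 0.
Hypothesis S_closedY : forall j, S j -> S (j + 2) \/ (yco V (j + 2)).[s] = 0.

Lemma vanishing_on_submodule : fibre_submodule V s (vanishing_on S).
Proof.
have scale_closed c f : vanishing_on S f -> vanishing_on S (fun j => c j * f j).
  by move=> [fe f0]; split=> [|j Sj]; [exact: fibre_eltM | rewrite f0 ?mulr0].
split; first by move=> f [].
split; first by split; [exact: fibre_elt0|].
split.
  move=> f g [fe f0] [ge g0]; split=> [|j Sj]; first exact: fibre_eltD.
  by rewrite f0 ?g0 ?addr0.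
split; first by move=> c f; exact: (scale_closed (fun=> c)).
split.
  move=> f [fe f0]; split=> [|j Sj]; first exact: fibre_eltX.
  by rewrite /fX; case: (S_closedX Sj) => [/f0 ->|->]; rewrite ?mulr0 ?mul0r.
split.
  move=> f [fe f0]; split=> [|j Sj]; first exact: fibre_eltY.
  by rewrite /fY; case: (S_closedY Sj) => [/f0 ->|->]; rewrite ?mulr0 ?mul0r.
split; first by move=> f; exact: scale_closed.
by move=> z f _; exact: scale_closed.
Qed.

Definition indicator (k : int) : int -> C := fun j => (j == k)%:R.

Lemma fibre_elt_indicator k : Kset V k -> fibre_elt V (indicator k).
Proof.
move=> Kk; split=> [|j nK]; rewrite /indicator.
  by exists `|k|%N => j hj; case: eqP => // ejk; lia.
by case: eqP => // ejk; subst.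
Qed.

Lemma vanishing_on_reducible k b :
  Kset V k -> ~ S k -> Kset V b -> S b -> ~ fibre_irreducible V s.
Proof.
move=> Kk nSk Kb Sb [_ /(_ _ vanishing_on_submodule) [W0|Wfull]].
  have : vanishing_on S (indicator k).
    split=> [|j Sj]; first exact: fibre_elt_indicator.
    by rewrite /indicator; case: eqP => // ejk; move: Sj; rewrite ejk.
  by rewrite W0 => /(congr1 (@^~ k))/eqP; rewrite /indicator eqxx oner_eq0.
have : vanishing_on S (indicator b) by rewrite Wfull; exact: fibre_elt_indicator.
by move=> [_ /(_ b Sb)/eqP]; rewrite /indicator eqxx oner_eq0.
Qed.

End VanishingOn.

Lemma exists_fibre_irreducible :
  generically_irreducible V -> exists s, fibre_irreducible V s.
Proof.
move=> gi; apply: contrapT => none; apply: (@complex_uncountable R).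
suff <- : [set s | ~ fibre_irreducible V s] = setT by [].
by apply/seteqP; split=> // s _ irr; apply: none; exists s.
Qed.

Lemma xco_neq0 k : generically_irreducible V ->
  Kset V k -> Kset V (k + 2) -> xco V k != 0.
Proof.
move=> /exists_fibre_irreducible [s irr] Kk Kk2; apply/eqP => x0; move: irr.
pose S := [set j | exists n : nat, j = k + 2 + 2 * n%:Z].
apply: (@vanishing_on_reducible s S _ _ k (k + 2)) => //.
- move=> _ [[|n] ->]; last by left; exists n; lia.
  by right; rewrite mulr0 addr0 addrK x0 horner0.
- by move=> _ [n ->]; left; exists n.+1; lia.
- by move=> [n]; lia.
- by exists 0%N; rewrite mulr0 addr0.
Qed.

Lemma yco_neq0 k : generically_irreducible V ->
  Kset V k -> Kset V (k - 2) -> yco V k != 0.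
Proof.
move=> /exists_fibre_irreducible [s irr] Kk Kk2; apply/eqP => y0; move: irr.
pose S := [set j | exists n : nat, j = k - 2 - 2 * n%:Z].
apply: (@vanishing_on_reducible s S _ _ k (k - 2)) => //.
- by move=> _ [n ->]; left; exists n.+1; lia.
- move=> _ [[|n] ->]; last by left; exists n; lia.
  by right; rewrite mulr0 subr0 subrK y0 horner0.
- by move=> [n]; lia.
- by exists 0%N; rewrite mulr0 subr0.
Qed.

End Fibres.

Definition extremal (K : set int) (j : int) (k : 'I_2) : Prop :=
  K j /\ ~ K (if k == ord0 then j + 2 else j - 2).

Definition spin_weight (k : 'I_2) : int := if k == ord0 then 1 else -1.

Lemma ord2_cases (k : 'I_2) : k = ord0 \/ k = ord_max.
Proof. by case: k => [[|[|//]] hk]; [left|right]; apply: val_inj. Qed.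

Section DiracKernel.
Variables (R : realType) (V : gdK_module R).
Local Notation C := R[i].
Local Notation P := {poly C}.

Lemma Dirac_ord0 (u : int -> 'cV[P]_2) j :
  Dirac V u j ord0 ord0 = yco V (j + 2) * u (j + 2) ord_max ord0.
Proof.
rewrite /Dirac /tensX /tensY !mxE !big_ord_recl !big_ord0 !mxE /=.
have -> : lift ord0 ord0 = ord_max :> 'I_2 by apply: val_inj.
rewrite !mul0r !addr0 !add0r mulr0 add0r mulrCA [X in _ * X]mulrA -polyC_natr -polyCM.
by rewrite mulVf ?pnatr_eq0 // mul1r.
Qed.

Lemma Dirac_ord_max (u : int -> 'cV[P]_2) j :
  Dirac V u j ord_max ord0 = (4^-1 : C)%:P * (xco V (j - 2) * u (j - 2) ord0 ord0).
Proof.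
rewrite /Dirac /tensX /tensY !mxE !big_ord_recl !big_ord0 !mxE /=.
by rewrite !mul0r !mul1r !addr0 mulr0 addr0.
Qed.

Lemma hVS_ord0 (u : int -> 'cV[P]_2) j :
  hVS u j ord0 ord0 = ((j + 1)%:~R : C)%:P * u j ord0 ord0.
Proof.
rewrite /hVS /h_spin !mxE !big_ord_recl !big_ord0 !mxE /= !big_ord_recl !big_ord0 !mxE /=.
rewrite !mul0r !add0r !mulr1 !addr0 !mulr0 subrr mul0r addr0.
have -> : (2^-1 : C)%:P * 4%:R - 1 = 1 :> P.
  by rewrite -polyC_natr -polyCM -polyC1 -polyCB; congr (_%:P); field.
by rewrite mul1r intrD rmorphD mulrDl /= polyC1 mul1r.
Qed.

Lemma hVS_ord_max (u : int -> 'cV[P]_2) j :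
  hVS u j ord_max ord0 = ((j - 1)%:~R : C)%:P * u j ord_max ord0.
Proof.
rewrite /hVS /h_spin !mxE !big_ord_recl !big_ord0 !mxE /= !big_ord_recl !big_ord0 !mxE /=.
have -> : lift ord0 ord0 = ord_max :> 'I_2 by apply: val_inj.
by rewrite intrB rmorphB /= polyC1; ring.
Qed.

Lemma vtensE j0 k0 j k : vtens R j0 k0 j k ord0 = ((j == j0) && (k == k0))%:R.
Proof. by rewrite /vtens; case: eqP => _; rewrite !mxE //= andbT. Qed.

Lemma sum_vtensE n (p : 'I_n -> P) (pos : 'I_n -> int) (comp : 'I_n -> 'I_2) j k :
  (\sum_a p a *: vtens R (pos a) (comp a) j) k ord0 =
  \sum_(a | (pos a == j) && (comp a == k)) p a.
Proof.
rewrite summxE [RHS]big_mkcond; apply: eq_bigr => a _.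
by rewrite mxE vtensE [j == _]eq_sym [k == _]eq_sym; case: ifP; rewrite ?mulr1 ?mulr0.
Qed.

Lemma VS_elt_vtens j k : Kset V j -> VS_elt V (vtens R j k).
Proof.
move=> Kj; split=> [|i nK]; rewrite /vtens.
  by exists `|j|%N => i hi; case: eqP => // eij; lia.
by case: eqP => // eij; subst.
Qed.

Lemma kerD_extremal u j k : generically_irreducible V ->
  in_kerD V u -> u j k ord0 != 0 -> extremal (Kset V) j k.
Proof.
move=> gi [[_ uK] Du0] nz.
have Kj : Kset V j by apply: contrapT => nK; move: nz; rewrite (uK _ nK) mxE eqxx.
split=> // Kj2; move/eqP: nz; apply.
case: (ord2_cases k) Kj2 => -> /= Kj2.
- have := congr1 (fun f : int -> 'cV[P]_2 => f (j + 2) ord_max ord0) Du0.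
  rewrite /= Dirac_ord_max addrK mxE => /eqP; rewrite !mulf_eq0 polyC_eq0 invr_eq0.
  by rewrite pnatr_eq0 (negbTE (xco_neq0 gi Kj Kj2)) /= => /eqP.
- have := congr1 (fun f : int -> 'cV[P]_2 => f (j - 2) ord0 ord0) Du0.
  rewrite /= Dirac_ord0 subrK mxE => /eqP; rewrite mulf_eq0.
  by rewrite (negbTE (yco_neq0 gi Kj Kj2)) /= => /eqP.
Qed.

Lemma imD_extremal u j k : in_imD V u -> extremal (Kset V) j k -> u j k ord0 = 0.
Proof.
move=> [w [_ ->]] [_]; case: (ord2_cases k) => -> /= nK.
- rewrite Dirac_ord0; have [/yco_supp [] //|/negPn/eqP ->] := boolP (yco V (j + 2) != 0).
  by rewrite mul0r.
- rewrite Dirac_ord_max; have [/xco_supp [/nK] //|/negPn/eqP ->] := boolP (xco V (j - 2) != 0).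
  by rewrite mul0r mulr0.
Qed.

Lemma vtens_kerD j k : extremal (Kset V) j k -> in_kerD V (vtens R j k).
Proof.
move=> [Kj nK]; split; first exact: VS_elt_vtens.
apply: funext => i; apply/colP => l; rewrite [RHS]mxE.
case: (ord2_cases l) => ->; rewrite ?Dirac_ord0 ?Dirac_ord_max vtensE.
all: case: (ord2_cases k) nK => -> /= nK; rewrite ?andbF ?andbT ?mulr0 //.
- case: eqP => [eij|_]; last by rewrite mulr0.
  have [/yco_supp [_]|/negPn/eqP ->] := boolP (yco V (i + 2) != 0); last by rewrite mul0r.
  by rewrite eij => /nK.
- case: eqP => [eij|_]; last by rewrite !mulr0.
  have [/xco_supp [_]|/negPn/eqP ->] := boolP (xco V (i - 2) != 0); last by rewrite !mul0r mulr0.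
  by rewrite eij => /nK.
Qed.

Lemma hVS_vtens j k :
  hVS (vtens R j k) = fun i => ((j + spin_weight k)%:~R : C)%:P *: vtens R j k i.
Proof.
apply: funext => i; apply/colP => l; rewrite [RHS]mxE.
case: (ord2_cases l) => ->; rewrite ?hVS_ord0 ?hVS_ord_max !vtensE.
all: case: eqP => [->|_]; last by rewrite !mulr0.
all: by case: (ord2_cases k) => ->; rewrite /spin_weight /= ?mulr0.
Qed.

Lemma in_imD0 : in_imD V (fun _ => 0).
Proof.
exists (fun _ => 0); split; first by split=> //; exists 0%N.
apply: funext => j; apply/colP => l; rewrite mxE.
by case: (ord2_cases l) => ->; rewrite ?Dirac_ord0 ?Dirac_ord_max mxE !mulr0.
Qed.

Lemma DiracCohom_zeroP : generically_irreducible V ->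
  DiracCohom_zero V <-> forall j k, ~ extremal (Kset V) j k.
Proof.
move=> gi; split=> [Z j k E | none u ku].
  have := imD_extremal (Z _ (vtens_kerD E)) E.
  by rewrite vtensE !eqxx => /eqP; rewrite oner_eq0.
suff -> : u = fun _ => 0 by exact: in_imD0.
apply: funext => j; apply/colP => k; rewrite mxE.
have [//|nz] := eqVneq (u j k ord0) 0.
by case: (none j k); exact: kerD_extremal gi ku nz.
Qed.

Lemma DiracCohom_free_on_extremal n (g : 'I_n -> int -> 'cV[P]_2) (wt : 'I_n -> int)
    (pos : 'I_n -> int) (comp : 'I_n -> 'I_2) :
  generically_irreducible V ->
  (forall a, g a = vtens R (pos a) (comp a)) ->
  (forall a, wt a = pos a + spin_weight (comp a)) ->
  (forall a, extremal (Kset V) (pos a) (comp a)) ->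
  (forall a b, pos a = pos b -> comp a = comp b -> a = b) ->
  (forall j k, extremal (Kset V) j k -> exists a, pos a = j /\ comp a = k) ->
  DiracCohom_free_on V g wt.
Proof.
move=> gi gE wtE ext_pos pos_inj pos_onto.
have {gE} -> : g = fun a => vtens R (pos a) (comp a) := funext gE.
have sum_at p a : (\sum_b p b *: vtens R (pos b) (comp b) (pos a)) (comp a) ord0 = p a.
  rewrite sum_vtensE (big_pred1 a) // => b.
  by apply/andP/eqP => [[/eqP pab /eqP cab]|->]; [exact: pos_inj|].
split; first by move=> a; exact: vtens_kerD.
split; first by move=> a; rewrite wtE; exact: hVS_vtens.
split.
  move=> u ku; exists (fun a => u (pos a) (comp a) ord0), (fun _ => 0).
  split; first exact: in_imD0.
  apply: funext => j; apply/colP => k; rewrite [RHS]mxE [X in _ = _ + X]mxE addr0.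
  have [E|nE] := pselect (extremal (Kset V) j k).
    by have [a [<- <-]] := pos_onto _ _ E; rewrite sum_at.
  rewrite sum_vtensE big_pred0; last first.
    by move=> a; apply/negP => /andP [/eqP pa /eqP ca]; apply: nE; rewrite -pa -ca.
  have [//|nz] := eqVneq (u j k ord0) 0.
  by case: nE; exact: kerD_extremal gi ku nz.
move=> p Ip a; have := imD_extremal Ip (ext_pos a).
by rewrite /= sum_at.
Qed.

End DiracKernel.

Lemma DiracCohom_free_on_single (R : realType) (V : gdK_module R) j0 k0 :
  generically_irreducible V ->
  (forall j k, extremal (Kset V) j k <-> j = j0 /\ k = k0) ->
  DiracCohom_free_on V (fun _ : 'I_1 => vtens R j0 k0) (fun _ => j0 + spin_weight k0).
Proof.
move=> gi ext.
apply: (DiracCohom_free_on_extremal (pos := fun _ => j0) (comp := fun _ => k0)) => //.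
- by move=> _; apply/ext.
- by move=> a b _ _; rewrite !ord1.
- by move=> j k /ext [-> ->]; exists ord0.
Qed.

Lemma extremal_up_ray (m : nat) j k :
  extremal [set j : int | (m%:Z <= j) && ((j - m%:Z) %% 2 == 0)%Z] j k <->
  j = m /\ k = ord_max.
Proof.
rewrite /extremal; case: (ord2_cases k) => -> /=; split.
- by move=> [? ?]; exfalso; lia.
- by move=> [_ /(congr1 val)].
- by move=> [? ?]; split=> //; lia.
- by move=> [-> _]; split; lia.
Qed.

Lemma extremal_down_ray (m : nat) j k :
  extremal [set j : int | (j <= - m%:Z) && ((j + m%:Z) %% 2 == 0)%Z] j k <->
  j = - m%:Z /\ k = ord0.
Proof.
rewrite /extremal; case: (ord2_cases k) => -> /=; split.
- by move=> [? ?]; split=> //; lia.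
- by move=> [-> _]; split; lia.
- by move=> [? ?]; exfalso; lia.
- by move=> [_ /(congr1 val)].
Qed.

Lemma extremal_segment (m : nat) j k :
  extremal [set j : int | (- m%:Z <= j <= m%:Z) && ((j + m%:Z) %% 2 == 0)%Z] j k <->
  (j = m /\ k = ord0) \/ (j = - m%:Z /\ k = ord_max).
Proof.
rewrite /extremal; case: (ord2_cases k) => -> /=; split.
- by move=> [? ?]; left; split=> //; lia.
- by move=> [[-> _]|[_ /(congr1 val)]] //; split; lia.
- by move=> [? ?]; right; split=> //; lia.
- by move=> [[_ /(congr1 val)]|[-> _]] //; split; lia.
Qed.

Lemma not_extremal_parity (r : int) j k :
  ~ extremal [set j : int | (j %% 2 == r)%Z] j k.
Proof. by rewrite /extremal; case: (ord2_cases k) => -> /=; lia. Qed.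

Lemma sl2_Ktype_no_extremal (K : set int) : sl2_Ktype_set K ->
  (forall j k, ~ extremal K j k) <->
  (K = [set j : int | (j %% 2 == 0)%Z] \/ K = [set j : int | (j %% 2 == 1)%Z]).
Proof.
move=> sl2K; split=> [none|]; last by case=> -> j k; exact: not_extremal_parity.
case: sl2K => [[m [_ E]]|[[m [_ E]]|[[m E]|[->|->]]]]; [| | |by left|by right]; subst K.
- by case: (none m ord_max); apply/extremal_up_ray.
- by case: (none (- m%:Z) ord0); apply/extremal_down_ray.
- by case: (none m ord0); apply/extremal_segment; left.
Qed.

Theorem mainTheorem15 (R : realType) (V : gdK_module R) :
  generically_irreducible V ->
  sl2_Ktype_set (Kset V) ->
  (DiracCohom_zero V <->
     (Kset V = [set j : int | (j %% 2 == 0)%Z] \/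
      Kset V = [set j : int | (j %% 2 == 1)%Z])) /\
  (forall m : nat, (1 <= m)%N ->
     Kset V = [set j : int | (m%:Z <= j) && ((j - m%:Z) %% 2 == 0)%Z] ->
     DiracCohom_free_on V (fun _ : 'I_1 => vtens R m%:Z 1)
                          (fun _ => m%:Z - 1)) /\
  (forall m : nat, (1 <= m)%N ->
     Kset V = [set j : int | (j <= - m%:Z) && ((j + m%:Z) %% 2 == 0)%Z] ->
     DiracCohom_free_on V (fun _ : 'I_1 => vtens R (- m%:Z) 0)
                          (fun _ => - m%:Z + 1)) /\
  (forall m : nat,
     Kset V = [set j : int | (- m%:Z <= j <= m%:Z) && ((j + m%:Z) %% 2 == 0)%Z] ->
     DiracCohom_free_on V
       (fun a : 'I_2 => if (a : nat) == 0%N then vtens R m%:Z 0 else vtens R (- m%:Z) 1)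
       (fun a : 'I_2 => if (a : nat) == 0%N then m%:Z + 1 else - m%:Z - 1)).
Proof.
move=> gi sl2K.
have ord2_0 : (0 : 'I_2) = ord0 by apply: val_inj.
have ord2_1 : (1 : 'I_2) = ord_max by apply: val_inj.
split; first by rewrite (DiracCohom_zeroP gi); exact: sl2_Ktype_no_extremal.
split.
  move=> m _ Km; rewrite ord2_1.
  apply: (@DiracCohom_free_on_single R V m%:Z ord_max gi) => j k.
  by rewrite Km; exact: extremal_up_ray.
split.
  move=> m _ Km; rewrite ord2_0.
  apply: (@DiracCohom_free_on_single R V (- m%:Z) ord0 gi) => j k.
  by rewrite Km; exact: extremal_down_ray.
move=> m Km; rewrite ord2_0 ord2_1.
pose pos (a : 'I_2) : int := if (a : nat) == 0%N then m%:Z else - m%:Z.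
pose comp (a : 'I_2) : 'I_2 := if (a : nat) == 0%N then ord0 else ord_max.
apply: (DiracCohom_free_on_extremal (pos := pos) (comp := comp) gi).
- by move=> a; rewrite /pos /comp; case: ifP.
- by move=> a; rewrite /pos /comp; case: ifP.
- move=> a; rewrite Km; apply/extremal_segment.
  by rewrite /pos /comp; case: ifP; [left|right].
- by move=> a b; case: (ord2_cases a) => ->; case: (ord2_cases b) => ->.

- move=> j k; rewrite Km => /extremal_segment [[-> ->]|[-> ->]].
  + by exists ord0.
  + by exists ord_max.
Qed.
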